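(* For any integers $n\ge k\ge 1$ and any positive integers $n_1\le n_2\le\cdots\le n_k$ with $n_1+\cdots+n_k=n$, the directed graph $\mathcal D(n_1,\ldots,n_k)$ is acyclic.
   Context: Let $n_1\le\cdots\le n_k$ be positive integers. The graph $\mathcal G(n_1,\ldots,n_k)$ has vertices $v_{j,a}$ for $1\le j\le k$, $1\le a\le n_j$, and the following edges: the path edges $v_{j,a}v_{j,a+1}$ for $1\le j\le k$, $1\le a<n_j$ (forming paths $P_j=v_{j,1}v_{j,2}\cdots v_{j,n_j}$); and, for each pair $1\le h<j\le k$: (i) $v_{h,a}v_{j,a}$ for each $1\le a<n_h$; (ii) $v_{h,a+1}v_{j,a}$ for each $1\le a<n_h$; (iii) $v_{h,n_h}v_{j,a}$ for each $n_h\le a\le n_j$. Let $f$ be the function defined on vertices $v_{j,a}$ with $a<n_j$ by $f(v_{j,a})=v_{j,a+1}$. The digraph $\mathcal D(n_1,\ldots,n_k)$ (the influence digraph of $f$) has vertex set $V(\mathcal G(n_1,\ldots,n_k))$ and an arc $v\to w$ if and only if $v$ is in the domain of $f$, $v\ne w$, and either $w=f(v)$ or $w$ is adjacent to $f(v)$ in $\mathcal G(n_1,\ldots,n_k)$. *)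

From mathcomp Require Import all_boot.
Set Implicit Arguments. Unset Strict Implicit. Unset Printing Implicit Defensive.

(* The sequence ns = [:: n_1; ...; n_k]; paper indices are 1-based:
   n_j = nth 0 ns j.-1, and vertex v_{j,a} is encoded as the pair (j, a). *)
Definition nj (ns : seq nat) (j : nat) : nat := nth 0 ns j.-1.

Definition is_vertex (ns : seq nat) (v : nat * nat) : bool :=
  [&& 1 <= v.1, v.1 <= size ns, 1 <= v.2 & v.2 <= nj ns v.1].

(* One orientation of the listed edges of G(n_1,...,n_k). *)
Definition edge_dir (ns : seq nat) (u v : nat * nat) : bool :=
  let: (h, b) := u in let: (j, c) := v in
  (* path edges v_{j,a} v_{j,a+1}, 1 <= a < n_j *)
  [&& h == j, 1 <= b, b < nj ns h & c == b.+1]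
  || (h < j) &&
     [|| (* (i) v_{h,a} v_{j,a}, 1 <= a < n_h *)
         [&& 1 <= b, b < nj ns h & c == b],
         (* (ii) v_{h,a+1} v_{j,a}, 1 <= a < n_h *)
         [&& 1 <= c, c < nj ns h & b == c.+1]
       | (* (iii) v_{h,n_h} v_{j,a}, n_h <= a <= n_j *)
         [&& b == nj ns h, nj ns h <= c & c <= nj ns j]].

Definition adjG (ns : seq nat) (u v : nat * nat) : bool :=
  [&& is_vertex ns u, is_vertex ns v & edge_dir ns u v || edge_dir ns v u].

Definition in_dom_f (ns : seq nat) (v : nat * nat) : bool :=
  is_vertex ns v && (v.2 < nj ns v.1).
Definition f_map (v : nat * nat) : nat * nat := (v.1, v.2.+1).

Definition arcD (ns : seq nat) (v w : nat * nat) : bool :=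
  [&& is_vertex ns w, in_dom_f ns v, v != w &
      (w == f_map v) || adjG ns (f_map v) w].

Definition acyclicD (ns : seq nat) : Prop :=
  forall c : seq (nat * nat), c != [::] -> all (is_vertex ns) c -> ~~ cycle (arcD ns) c.

From mathcomp Require Import all_boot order.

Set Implicit Arguments.
Unset Strict Implicit.
Unset Printing Implicit Defensive.

(* An arc v_{j,a} -> v_{l,c} of D leaves a vertex of the domain of f, so every
   vertex lying on a directed cycle is in that domain.  Between two such
   vertices, an arc strictly increases the pair (a, j) in the lexicographic
   order: the row index a never drops, and when it stays the same the path
   index j grows (this is the case analysis over the edge types of G in
   [arc_lex_increase]).  A directed cycle would then be a cycle of a strict
   order, which is impossible ([no_strict_cycle]). *)

Import Order.TTheory.
Local Open Scope order_scope.

Lemma no_strict_cycle (T : eqType) (disp : Order.disp_t) (U : porderType disp)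
    (r : T -> U) (c : seq T) :
  c != [::] -> ~~ cycle (relpre r <%O) c.
Proof.
case: c => [|x p] // _; rewrite -cycle_map /= -map_rcons.
rewrite (path_sortedE lt_trans); apply/negP => /andP[/allP lt_rx _].
suff : r x < r x by rewrite ltxx.
by apply: lt_rx; rewrite map_rcons mem_rcons mem_head.
Qed.

Local Close Scope order_scope.

Lemma arc_source_in_dom (ns : seq nat) (v w : nat * nat) :
  arcD ns v w -> in_dom_f ns v.
Proof. by case/and4P. Qed.

Lemma cycle_in_dom (ns : seq nat) (c : seq (nat * nat)) :
  cycle (arcD ns) c -> all (in_dom_f ns) c.
Proof.
by move=> cyc_c; apply/allP => v v_c; exact: arc_source_in_dom (next_cycle cyc_c v_c).
Qed.

(* The arc w = f(v) raises the row; otherwise w is a neighbour in G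
   of f(v) = v_{j,a+1}, and each edge type either raises the row, keeps row a
   while raising the path index (edge (ii) read forwards), leads back to v
   itself (a path edge read backwards), or, for edge (iii) read backwards,
   forces c = n_l, contradicting that w is in the domain of f. *)
Lemma arc_lex_increase (ns : seq nat) (j a l c : nat) :
  arcD ns (j, a) (l, c) -> in_dom_f ns (l, c) -> a < c \/ (a = c /\ j < l).
Proof.
rewrite /arcD /in_dom_f /adjG /edge_dir /f_map /=.
case/and4P=> _ _ v_neq_w arc /andP[_ c_lt_nl].
case/orP: arc => [/eqP[_ ->]|/and3P[_ _ /orP[fwd|bwd]]]; first by left.
- case/orP: fwd => [/and3P[_ _ /eqP->]|/andP[j_lt_l edge]]; first by left.
  case/or3P: edge => [/andP[_ /eqP->]|/and3P[_ _ /eqP[->]]|/and3P[/eqP a_eq nj_le_c _]].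
  + by left.
  + by right.
  + by left; rewrite a_eq.
- case/orP: bwd => [/and4P[/eqP l_eq _ _ /eqP[a_eq]]|/andP[l_lt_j edge]].
  + by rewrite l_eq a_eq eqxx in v_neq_w.
  case/or3P: edge => [/and3P[_ _ /eqP<-]|/andP[_ /eqP->]|/and3P[/eqP c_eq _ _]].
  + by left.
  + by left.
  + by rewrite c_eq ltnn in c_lt_nl.
Qed.

Definition lex_rank (v : nat * nat) : nat *l nat := (v.2, v.1).

Lemma arc_rank_increase (ns : seq nat) (v w : nat * nat) :
  in_dom_f ns w -> arcD ns v w -> (lex_rank v < lex_rank w)%O.
Proof.
case: v w => [j a] [l c] w_dom arc; rewrite /lex_rank /= ltxi_pair !leEnat ltEnat.
case: (arc_lex_increase arc w_dom) => [a_lt_c|[<- j_lt_l]].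
- by rewrite ltnW //= leqNgt a_lt_c.
- by rewrite leqnn.
Qed.

Theorem mainTheorem9 (n k : nat) (ns : seq nat) :
  1 <= k -> k <= n -> size ns = k ->
  all (fun m => 0 < m) ns -> sorted leq ns -> sumn ns = n ->
  acyclicD ns.
Proof.
move=> _ _ _ _ _ _ c c_nonempty _; apply/negP => cyc_c.
have /allP c_dom := cycle_in_dom cyc_c.
have : cycle (relpre lex_rank <%O) c.
  by apply: sub_in_cycle (allss c) cyc_c => v w _ /c_dom; exact: arc_rank_increase.
by apply/negP; exact: no_strict_cycle.
Qed.
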